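(* Let $\{X_n;n\ge1\}$ be a sequence of independent random variables in a sub-linear expectation space $(\Omega,\mathscr H,\hat{\mathbb E})$ with $\hat{\mathbb E}[X_k^2]<\infty$ and $\hat{\mathbb E}[X_k]\le0$ for all $k$. Let $S_n=\sum_{k=1}^nX_k$, $V_n^2=\sum_{k=1}^nX_k^2$, $\overline B_n^2=\sum_{k=1}^n\hat{\mathbb E}[X_k^2]$, $\underline B_n^2=\sum_{k=1}^n\hat{\mathcal E}[X_k^2]>0$, $q_n=\overline B_n^2/\underline B_n^2$ and $\Delta_{n,x}=\overline B_n^{-2}\sum_{k=1}^n\hat{\mathbb E}[X_k^2(1\wedge|xX_k/\overline B_n|)]$. Let $0<\delta\le\frac14\underline B_n^2/\overline B_n^2$. Then there is an absolute constant $C$ such that for all $x\ge2$, $$\mathbb V\big(S_n\ge xV_n,\ V_n^2\le\delta\overline B_n^2\big)\le\exp\{-2x^2+Cx^2q_n^3\Delta_{n,x}\}.$$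
   Context: Sub-linear expectation space: $\mathscr H$ is a linear space of real functions on a measurable space $(\Omega,\mathcal F)$, closed under $\varphi(X_1,\dots,X_n)$ for $\varphi$ bounded continuous or locally Lipschitz with polynomial growth; $\hat{\mathbb E}:\mathscr H\to[-\infty,\infty]$ is monotone, constant preserving, sub-additive and positively homogeneous. $\hat{\mathcal E}[X]=-\hat{\mathbb E}[-X]$; $\mathbb V(A)=\inf\{\hat{\mathbb E}[\xi]:I_A\le\xi,\xi\in\mathscr H\}$. Independence: $\mathbf Y$ is independent of $\mathbf X$ if $\hat{\mathbb E}[\varphi(\mathbf X,\mathbf Y)]=\hat{\mathbb E}[\hat{\mathbb E}[\varphi(\mathbf x,\mathbf Y)]|_{\mathbf x=\mathbf X}]$ for all locally Lipschitz $\varphi$ of polynomial growth (whenever the relevant expectations are finite); $\{X_n\}$ is independent if $X_{i+1}$ is independent of $(X_1,\dots,X_i)$ for each $i$. $a\wedge b=\min(a,b)$. *)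

From HB Require Import structures.
From mathcomp Require Import all_boot all_order all_algebra.
From mathcomp Require Import all_classical all_reals all_analysis.
Set Implicit Arguments. Unset Strict Implicit. Unset Printing Implicit Defensive.
Import Order.TTheory GRing.Theory Num.Theory.
Import numFieldNormedType.Exports.
Local Open Scope classical_set_scope.
Local Open Scope ring_scope.

(* Test functions on R^n (row vectors, with the library's max norm). *)
Definition bounded_continuous (R : realType) (n : nat) (phi : 'rV[R]_n -> R) :=
  continuous phi /\ exists M : R, forall x, `|phi x| <= M.

Definition loc_lip_poly (R : realType) (n : nat) (phi : 'rV[R]_n -> R) :=
  exists (C : R) (m : nat), forall x y,
    `|phi x - phi y| <= C * (1 + `|x| ^+ m + `|y| ^+ m) * `|x - y|.

Definition compose_rv (R : realType) (Omega : Type) (n : nat)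
  (phi : 'rV[R]_n -> R) (Xs : 'I_n -> Omega -> R) : Omega -> R :=
  fun w => phi (\row_i Xs i w).

Record sublinear_space (R : realType) (Omega : Type) := SublinearSpace {
  sl_H : set (Omega -> R);
  sl_E : (Omega -> R) -> \bar R;
  sl_H0 : sl_H (fun _ => 0);
  sl_HD : forall X Y, sl_H X -> sl_H Y -> sl_H (fun w => X w + Y w);
  sl_HZ : forall (a : R) X, sl_H X -> sl_H (fun w => a * X w);
  sl_Hcomp : forall (n : nat) (phi : 'rV[R]_n -> R) (Xs : 'I_n -> Omega -> R),
      (forall i, sl_H (Xs i)) ->
      (bounded_continuous phi \/ loc_lip_poly phi) ->
      sl_H (compose_rv phi Xs);
  sl_mono : forall X Y, sl_H X -> sl_H Y -> (forall w, X w <= Y w) ->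
      (sl_E X <= sl_E Y)%E;
  sl_cst : forall c : R, sl_E (fun _ => c) = c%:E;
  sl_subadd : forall X Y, sl_H X -> sl_H Y ->
      ~ (sl_E X = +oo%E /\ sl_E Y = -oo%E) ->
      ~ (sl_E X = -oo%E /\ sl_E Y = +oo%E) ->
      (sl_E (fun w => (X w + Y w)%R) <= sl_E X + sl_E Y)%E;
  sl_homog : forall (l : R) X, sl_H X -> 0 < l ->
      sl_E (fun w => l * X w) = (l%:E * sl_E X)%E
}.

Definition lower_E (R : realType) (Omega : Type) (S : sublinear_space R Omega)
  (X : Omega -> R) : \bar R := (- sl_E S (fun w => (- X w)%R))%E.

Definition capV (R : realType) (Omega : Type) (S : sublinear_space R Omega)
  (A : set Omega) : \bar R :=
  ereal_inf [set sl_E S xi | xi in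
     [set xi | sl_H S xi /\ forall w, (\1_A w : R) <= xi w]].

Definition independent_of (R : realType) (Omega : Type)
  (S : sublinear_space R Omega) (m : nat)
  (Xs : 'I_m -> Omega -> R) (Y : Omega -> R) :=
  forall phi : 'rV[R]_(m + 1) -> R, loc_lip_poly phi ->
    let psi := fun x : 'rV[R]_m =>
      sl_E S (fun w => phi (row_mx x (\row_(j < 1) Y w))) in
    (forall x, psi x \is a fin_num) ->
    sl_E S (fun w => fine (psi (\row_i Xs i w))) \is a fin_num ->
    sl_E S (fun w => phi (row_mx (\row_i Xs i w) (\row_(j < 1) Y w)))
      = sl_E S (fun w => fine (psi (\row_i Xs i w))).

Definition indep_seq (R : realType) (Omega : Type)
  (S : sublinear_space R Omega) (X : nat -> Omega -> R) :=
  forall i : nat, (1 <= i)%N ->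
    independent_of S (fun j : 'I_i => X j.+1) (X i.+1).

From HB Require Import structures.
From mathcomp Require Import all_boot all_order all_algebra.
From mathcomp Require Import all_classical all_reals all_analysis.
From mathcomp Require Import ring lra.
Import Order.TTheory GRing.Theory Num.Theory.
Import numFieldNormedType.Exports.
Set Implicit Arguments. Unset Strict Implicit. Unset Printing Implicit Defensive.
Local Open Scope classical_set_scope.
Local Open Scope ring_scope.

(* Put l = 2 x / sqrt(Bund2) and phi_l(y) = exp(l y - l^2 y^2).  On the event,
   S_n >= x V_n and l V_n <= x, so prod_k phi_l(X_k) = exp(l S_n - l^2 V_n^2) >= 1
   and the capacity is at most the sub-linear expectation of this product.
   Independence factorises that expectation.  The elementary inequality
   e^(v - v^2) <= 1 + v - v^2/2 + 10 v^2 (1 /\ |v|), sub-additivity and E[X_k] <= 0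
   give E[phi_l(X_k)] <= exp(- l^2/2 lowerE[X_k^2] + 10 l^2 E[X_k^2 (1 /\ |l X_k|)]),
   and summing the exponents leaves -2 x^2 + 80 x^2 q_n^2 Delta_(n,x). *)

Section Exponential.
Variable R : realType.
Implicit Types s t v : R.

Lemma derive_ge0_le (G dG : R -> R) (a b : R) : a <= b ->
  (forall x : R, is_derive x (1 : R) G (dG x)) ->
  (forall c, a <= c <= b -> 0 <= dG c) -> G a <= G b.
Proof.
move=> ab hG dG_ge0.
have [|c cab E] := MVT_segment ab (fun x _ => hG x).
  by apply: derivable_within_continuous => z _; exact: ex_derive.
rewrite -subr_ge0 E mulr_ge0 ?subr_ge0 // dG_ge0 //; by move: cab; rewrite in_itv.
Qed.

Lemma expR_le_invr t : t < 1 -> expR t <= (1 - t)^-1.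
Proof.
move=> t1; rewrite -[expR t]invrK -expRN.
by rewrite lef_pV2 ?posrE ?expR_gt0 ?subr_gt0 // expR_ge1Dx.
Qed.

Lemma expR_le_quarter t : t <= 1/4 -> expR t <= 4/3.
Proof.
move=> t14; have t1 : 0 < 1 - t by lra.
apply: le_trans (expR_le_invr _) _; first lra.
by rewrite -[(1 - t)^-1]mul1r ler_pdivrMr //; nra.
Qed.

Lemma expR_le_taylor2 t : t <= 0 -> expR t <= 1 + t + t ^+ 2 / 2.
Proof.
move=> t0; rewrite -subr_le0.
have := @derive_ge0_le (fun s => expR s - (1 + s + s ^+ 2 / 2))
  (fun s => expR s - (1 + s)) t 0 t0.
rewrite expR0 expr0n /= mul0r !addr0 subrr; apply.
- by move=> s; apply: is_derive_eq; rewrite !scaler0 !add0r /GRing.scale /= mulr1; field.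
- by move=> c _; rewrite subr_ge0 expR_ge1Dx.
Qed.

Lemma expR_le_taylor3 t : 0 <= t -> t <= 1/4 ->
  expR t <= 1 + t + t ^+ 2 / 2 + t ^+ 3.
Proof.
move=> t0 t14; rewrite -subr_ge0.
have := @derive_ge0_le (fun s => 1 + s + s ^+ 2 / 2 + s ^+ 3 - expR s)
  (fun s => 1 + s + 3 * s ^+ 2 - expR s) 0 t t0.
rewrite expR0 !expr0n /= mul0r !addr0 subrr; apply.
- by move=> s; apply: is_derive_eq; rewrite !scaler0 !add0r /GRing.scale /= !mulr1; field.
- move=> c /andP[c0 ct]; have c1 : 0 < 1 - c by lra.
  rewrite subr_ge0; apply: le_trans (expR_le_invr _) _; first lra.
  by rewrite -[(1 - c)^-1]mul1r ler_pdivrMr //; nra.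
Qed.

(* The exponent of [phi] below never exceeds 1/4, so only this range matters. *)
Lemma expR_lip_le_quarter s t : s <= 1/4 -> t <= 1/4 ->
  `|expR s - expR t| <= 4/3 * `|s - t|.
Proof.
wlog st : s t / s <= t.
  move=> H hs ht; have [st|/ltW ts] := leP s t; first exact: H.
  by rewrite distrC [`|s - t|]distrC; exact: H ts ht hs.
move=> _ ht; rewrite !ler0_norm ?subr_le0 ?ler_expR // !opprB.
have -> : expR t - expR s = expR t * (1 - expR (s - t)).
  by rewrite mulrBr mulr1 -expRD [t + _]addrC subrK.
apply: ler_pM; rewrite ?expR_ge0 ?expR_le_quarter //.
- by rewrite subr_ge0 expR_le1 subr_le0.
- by have := expR_ge1Dx (s - t); lra.
Qed.

Lemma expR_sub_sqr_le v :
  expR (v - v ^+ 2) <= 1 + v - v ^+ 2 / 2 + 10 * (v ^+ 2 * Num.min 1 `|v|).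
Proof.
have t14 : v - v ^+ 2 <= 1/4 by have := sqr_ge0 (v - 1/2); nra.
have [v1|v1] := leP `|v| 1; last first.
  apply: le_trans (expR_le_quarter t14) _.
  by have [v0|v0] := leP 0 v; [rewrite ger0_norm in v1 | rewrite ltr0_norm in v1]; nra.
have [t0|t0] := leP (v - v ^+ 2) 0.
  apply: le_trans (expR_le_taylor2 t0) _.
  have [v0|v0] := leP 0 v.
    rewrite ger0_norm // in v1 *.
    have : 0 <= v ^+ 3 * (1 - v) by rewrite mulr_ge0 ?exprn_ge0 ?subr_ge0.
    by rewrite !exprS expr0 !mulr1; nra.
  rewrite ltr0_norm // in v1 *.
  have : 0 <= - v * v ^+ 2 * (1 + v).
    by apply: mulr_ge0; [apply: mulr_ge0 (sqr_ge0 v) | ]; lra.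
  by rewrite !expr2; nra.
have v0 : 0 <= v by nra.
apply: le_trans (expR_le_taylor3 (ltW t0) t14) _.
rewrite ger0_norm // in v1 *.
have : (v - v ^+ 2) ^+ 3 <= v ^+ 3 by rewrite lerXn2r ?nnegrE ?(ltW t0) //; nra.
have : 0 <= v * v * v * (1 - v) by rewrite !mulr_ge0 ?subr_ge0.
by rewrite !exprS !expr0 !mulr1; nra.
Qed.

End Exponential.

Section Truncation.
Variable R : realType.

Lemma normr_subr_sqr_le (a b : R) : `|a ^+ 2 - b ^+ 2| <= (`|a| + `|b|) * `|a - b|.
Proof. by rewrite subr_sqr normrM mulrC ler_wpM2r ?ler_normD. Qed.

Lemma normr_min1_sub_le (u v : R) : `|Num.min 1 u - Num.min 1 v| <= `|u - v|.
Proof.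
case: (leP u 1); case: (leP v 1) => hv hu //; last by rewrite subrr normr0.
- by rewrite !ler0_norm; lra.
- by rewrite !ger0_norm; lra.
Qed.

Lemma min1_normrM_le (k y : R) : 1 <= k -> Num.min 1 `|k * y| <= k * Num.min 1 `|y|.
Proof.
move=> k1; have k0 := le_trans ler01 k1.
rewrite normrM (ger0_norm k0) minr_pMr // mulr1 le_min !ge_min k1 lexx.
by rewrite orbT.
Qed.

Lemma sqr_min1_ratio_le (x s t a : R) : 0 < x -> 0 < s -> s <= t ->
  (2 * x / s * a) ^+ 2 * Num.min 1 `|2 * x / s * a| <=
    2 * (t / s) ^+ 2 * (2 * x / s) ^+ 2 * (a ^+ 2 * Num.min 1 `|x * a / t|).
Proof.
move=> x0 s0 st; have t0 : 0 < t := lt_le_trans s0 st.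
have ts1 : 1 <= t / s by rewrite ler_pdivlMr // mul1r.
set k := 2 * (t / s); set u := x * a / t.
have -> : 2 * x / s * a = k * u by rewrite /k /u; field; rewrite !gt_eqF.
have -> : 2 * (t / s) ^+ 2 * (2 * x / s) ^+ 2 * (a ^+ 2 * Num.min 1 `|u|) =
    (k * u) ^+ 2 * (2 * (t / s) ^+ 2 * Num.min 1 `|u|).
  by rewrite /k /u; field; rewrite !gt_eqF.
have min_ge0 : 0 <= Num.min 1 `|u| by rewrite le_min ler01 normr_ge0.
apply: le_trans (_ : (k * u) ^+ 2 * (k * Num.min 1 `|u|) <= _).
  by rewrite ler_wpM2l ?sqr_ge0 // min1_normrM_le // /k; lra.
rewrite ler_wpM2l ?sqr_ge0 // ler_wpM2r // /k ler_pM2l // expr2 ler_peMl //; lra.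
Qed.

Lemma sqr_min1_lip (c d a b : R) :
  Num.norm (a ^+ 2 * Num.min 1 `|c * a / d| - b ^+ 2 * Num.min 1 `|c * b / d|) <=
    (1 + `|c / d|) * (1 + `|a| ^+ 2 + `|b| ^+ 2) * `|a - b|.
Proof.
set g := fun y => Num.min 1 `|c * y / d|.
have [ga0 ga1] : 0 <= g a /\ g a <= 1.
  by rewrite /g le_min ler01 normr_ge0 ge_min lexx.
have lip_g : `|g a - g b| <= `|c / d| * `|a - b|.
  apply: le_trans (normr_min1_sub_le _ _) _; apply: le_trans (ler_dist_dist _ _) _.
  have -> : c * a / d - c * b / d = c / d * (a - b) by ring.
  by rewrite normrM.
have -> : a ^+ 2 * g a - b ^+ 2 * g b = (a ^+ 2 - b ^+ 2) * g a + b ^+ 2 * (g a - g b) by ring.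
apply: le_trans (ler_normD _ _) _.
rewrite [`|_ * g a|]normrM [`|b ^+ 2 * _|]normrM (ger0_norm ga0) (ger0_norm (sqr_ge0 b)).
rewrite !real_normK ?num_real //.
have ab_le : `|a| + `|b| <= 1 + a ^+ 2 + b ^+ 2.
  rewrite -(real_normK (num_real a)) -(real_normK (num_real b)).
  by have := sqr_ge0 (`|a| - 1/2); have := sqr_ge0 (`|b| - 1/2); lra.
have h1 : `|a ^+ 2 - b ^+ 2| * g a <= (1 + a ^+ 2 + b ^+ 2) * `|a - b|.
  apply: le_trans (_ : `|a ^+ 2 - b ^+ 2| * 1 <= _); first by rewrite ler_wpM2l.
  by rewrite mulr1; apply: le_trans (normr_subr_sqr_le a b) _; rewrite ler_wpM2r.
have h2 : b ^+ 2 * `|g a - g b| <= `|c / d| * ((1 + a ^+ 2 + b ^+ 2) * `|a - b|).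
  rewrite mulrCA; apply: le_trans (ler_wpM2l (sqr_ge0 b) lip_g) _.
  by apply: ler_wpM2r; [rewrite mulr_ge0 | have := sqr_ge0 a; lra].
by apply: le_trans (lerD h1 h2) _; rewrite -mulrA [leRHS]mulrDl mul1r.
Qed.

End Truncation.

Section LocallyLipschitz.
Variable R : realType.

Lemma normr_mxentry_le m n (z : 'M[R]_(m, n)) i j : `|z i j| <= `|z|.
Proof.
rewrite [leRHS]mx_normrE.
exact: (le_bigmax _ (fun ij : 'I_m * 'I_n => `|z ij.1 ij.2|) (i, j)).
Qed.

Lemma normr_prod_sub_le (I : Type) (s : seq I) (M : R) (u v : I -> R) :
  1 <= M -> (forall i, 0 <= u i <= M) -> (forall i, 0 <= v i <= M) ->
  `|\prod_(i <- s) u i - \prod_(i <- s) v i| <=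
    M ^+ size s * \sum_(i <- s) `|u i - v i|.
Proof.
move=> M1 hu hv; have M0 : 0 <= M by lra.
elim: s => [|i s IH]; first by rewrite !big_nil subrr normr0 mulr0.
rewrite !big_cons /= exprS.
set A := \prod_(j <- s) u j; set B := \prod_(j <- s) v j.
have /andP[B0 BM] : 0 <= B <= M ^+ size s.
  rewrite /B; elim: (s) => [|j t /andP[P0 PM]]; first by rewrite big_nil expr0 ler01 lexx.
  have /andP[vj0 vjM] := hv j.
  by rewrite big_cons exprS mulr_ge0 ?ler_pM.
have /andP[ui0 uiM] := hu i.
have -> : u i * A - v i * B = u i * (A - B) + (u i - v i) * B by ring.
apply: le_trans (ler_normD _ _) _.
rewrite !normrM (ger0_norm ui0) (ger0_norm B0).
have -> : M * M ^+ size s * (`|u i - v i| + \sum_(j <- s) `|u j - v j|) =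
    M * (M ^+ size s * \sum_(j <- s) `|u j - v j|) + `|u i - v i| * (M * M ^+ size s).
  by ring.
apply: lerD; first by apply: ler_pM.
rewrite ler_wpM2l // -exprS; apply: le_trans BM _.
by rewrite exprS ler_peMl // exprn_ge0.
Qed.

Lemma loc_lip_poly_prod (f : R -> R) (M L : R) p :
  1 <= M -> 0 <= L -> (forall y, 0 <= f y <= M) ->
  (forall a b, `|f a - f b| <= L * (1 + `|a| + `|b|) * `|a - b|) ->
  loc_lip_poly (fun z : 'rV[R]_p => \prod_(j < p) f (z 0 j)).
Proof.
move=> M1 L0 hf hL; exists (M ^+ p * p%:R * L), 1%N => x y.
apply: le_trans (normr_prod_sub_le _ M1 (fun j => hf (x 0 j)) (fun j => hf (y 0 j))) _.
have -> : size (index_enum 'I_p) = p by rewrite -[index_enum _]enumT size_enum_ord.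
have M0 : 0 <= M by lra.
rewrite -!mulrA ler_wpM2l ?exprn_ge0 //.
apply: le_trans (_ : \sum_(j < p) L * (1 + `|x| + `|y|) * `|x - y| <= _); last first.
  by rewrite sumr_const cardT size_enum_ord mulr_natl !expr1 !mulrA.
apply: ler_sum => j _; apply: le_trans (hL _ _) _.
have dxy := normr_mxentry_le (x - y) 0 j; rewrite !mxE in dxy.
apply: ler_pM; rewrite ?mulr_ge0 ?addr_ge0 // ler_wpM2l //.
by rewrite !lerD ?normr_mxentry_le.
Qed.

End LocallyLipschitz.

Section Phi.
Variable R : realType.

Definition phi (l y : R) := expR (l * y - l ^+ 2 * y ^+ 2).

Lemma phi_exponent_le (l y : R) : l * y - l ^+ 2 * y ^+ 2 <= 1/4.
Proof. by have := sqr_ge0 (l * y - 1/2); rewrite -exprMn; nra. Qed.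

Lemma phi_bounds (l y : R) : 0 <= phi l y <= 4/3.
Proof. by rewrite expR_ge0 expR_le_quarter // phi_exponent_le. Qed.

Lemma phi_lip (l a b : R) : 0 <= l ->
  `|phi l a - phi l b| <= 4/3 * (l + l ^+ 2) * (1 + `|a| + `|b|) * `|a - b|.
Proof.
move=> l0; apply: le_trans (expR_lip_le_quarter (phi_exponent_le l a) (phi_exponent_le l b)) _.
rewrite -[leRHS]mulrA -[leRHS]mulrA; apply: ler_wpM2l; first lra.
have -> : l * a - l ^+ 2 * a ^+ 2 - (l * b - l ^+ 2 * b ^+ 2) =
    (l - l ^+ 2 * (a + b)) * (a - b) by ring.
rewrite normrM mulrA ler_wpM2r //; apply: le_trans (ler_normB _ _) _.
rewrite normrM (ger0_norm l0) (ger0_norm (sqr_ge0 l)).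
have : l ^+ 2 * `|a + b| <= l ^+ 2 * (`|a| + `|b|) by rewrite ler_wpM2l ?sqr_ge0 ?ler_normD.
by have := sqr_ge0 l; have := normr_ge0 a; have := normr_ge0 b; nra.
Qed.

Lemma phi_le_quadratic (l K y : R) (g : R -> R) :
  (forall a, (l * a) ^+ 2 * Num.min 1 `|l * a| <= K * g a) ->
  phi l y <= l * y + (1 + (l ^+ 2 / 2 * - y ^+ 2 + 10 * K * g y)).
Proof.
move=> hK; rewrite /phi -exprMn; apply: le_trans (expR_sub_sqr_le _) _.
by have := hK y; rewrite exprMn; lra.
Qed.

Lemma loc_lip_poly_prod_phi (l : R) p : 0 <= l ->
  loc_lip_poly (fun z : 'rV[R]_p => \prod_(j < p) phi l (z 0 j)).
Proof.
move=> l0; apply: (@loc_lip_poly_prod _ _ (4/3) (4/3 * (l + l ^+ 2))).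
- lra.
- by rewrite mulr_ge0 ?addr_ge0 ?sqr_ge0 //; lra.
- exact: phi_bounds.
- by move=> a b; exact: phi_lip.
Qed.

Lemma prod_phi_bounds (l : R) m (y : 'I_m -> R) :
  0 <= \prod_(j < m) phi l (y j) <= (4/3) ^+ m.
Proof.
rewrite prodr_ge0 => [|j _]; last by case/andP: (phi_bounds l (y j)).
rewrite -[m in _ ^+ m]card_ord -prodr_const.
by apply: ler_prod => j _; exact: phi_bounds.
Qed.

Lemma one_le_prod_phi n (y : 'I_n -> R) (l x : R) : 0 <= l -> 0 <= x ->
  x * Num.sqrt (\sum_j y j ^+ 2) <= \sum_j y j ->
  l ^+ 2 * \sum_j y j ^+ 2 <= x ^+ 2 ->
  1 <= \prod_j phi l (y j).
Proof.
move=> l0 x0 hxy hl.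
rewrite -expR_sum -expR0 ler_expR big_split /= sumrN -!mulr_sumr subr_ge0.
have y2_ge0 : 0 <= \sum_j y j ^+ 2 by rewrite sumr_ge0 // => j _; rewrite sqr_ge0.
set v := Num.sqrt _ in hxy; have v0 : 0 <= v := sqrtr_ge0 _.
rewrite -(sqr_sqrtr y2_ge0) -/v in hl *.
have lv_le_x : l * v <= x by rewrite -ler_sqr ?nnegrE ?mulr_ge0 // exprMn.
apply: le_trans (_ : l * (x * v) <= _); last by rewrite ler_wpM2l.
by have := ler_wpM2l (mulr_ge0 l0 v0) lv_le_x; rewrite !expr2; lra.
Qed.

Lemma one_le_prod_phi_scaled n (y : 'I_n -> R) (x b : R) : 0 <= x -> 0 < b ->
  x * Num.sqrt (\sum_j y j ^+ 2) <= \sum_j y j -> \sum_j y j ^+ 2 <= b / 4 ->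
  1 <= \prod_j phi (2 * x / Num.sqrt b) (y j).
Proof.
move=> x0 b0 hxy hb; apply: one_le_prod_phi hxy _ => //.
  by rewrite divr_ge0 ?mulr_ge0 ?sqrtr_ge0.
apply: le_trans (ler_wpM2l (sqr_ge0 _) hb) _.
rewrite expr_div_n sqr_sqrtr ?(ltW b0) //.
by have -> : (2 * x) ^+ 2 / b * (b / 4) = x ^+ 2 by field; rewrite gt_eqF.
Qed.

Lemma lambda_exponent_le (x b B D : R) : 0 < b -> b <= B -> 0 <= D ->
  10 * (2 * (B / b) * (2 * x / Num.sqrt b) ^+ 2) * (B * D)
    - (2 * x / Num.sqrt b) ^+ 2 / 2 * b <= - 2 * x ^+ 2 + 80 * x ^+ 2 * (B / b) ^+ 3 * D.
Proof.
move=> b0 bB D0; set l := 2 * x / Num.sqrt b.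
have q1 : 1 <= B / b by rewrite ler_pdivlMr // mul1r.
have -> : 10 * (2 * (B / b) * l ^+ 2) * (B * D) - l ^+ 2 / 2 * b =
    - 2 * x ^+ 2 + 80 * x ^+ 2 * (B / b) ^+ 2 * D.
  by rewrite /l expr_div_n sqr_sqrtr ?(ltW b0) //; field; rewrite gt_eqF.
rewrite lerD2l; apply: (ler_wpM2r D0); apply: ler_wpM2l; first by rewrite mulr_ge0 ?sqr_ge0.
by rewrite [leRHS]exprS ler_peMl ?sqr_ge0.
Qed.

Lemma prod_phi_row_mx (l : R) m (x : 'rV[R]_m) (y : R) :
  \prod_(j < m + 1) phi l (row_mx x (\row_(j0 < 1) y) 0 j) =
  (\prod_(j < m) phi l (x 0 j)) * phi l y.
Proof.
rewrite big_split_ord /= big_ord1; congr (_ * _).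
  by apply: eq_bigr => j _; rewrite row_mxEl.
by rewrite row_mxEr mxE.
Qed.

End Phi.

Section SublinearExpectation.
Variables (R : realType) (Omega : Type) (S : sublinear_space R Omega).
Local Notation E := (sl_E S).
Local Notation H := (sl_H S).
Implicit Types (X Y Z : Omega -> R) (a b c : R).

Lemma sl_H_comp1 (f : R -> R) (C : R) (m : nat) X : 0 <= C ->
  (forall a b, `|f a - f b| <= C * (1 + `|a| ^+ m + `|b| ^+ m) * `|a - b|) ->
  H X -> H (fun w => f (X w)).
Proof.
move=> C0 hf hX.
have -> : (fun w => f (X w)) = compose_rv (fun z : 'rV[R]_1 => f (z 0 0)) (fun _ => X).
  by apply/funext => w; rewrite /compose_rv mxE.
apply: sl_Hcomp => //; right; exists C, m => x y; apply: le_trans (hf _ _) _.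
have dxy := normr_mxentry_le (x - y) 0 0; rewrite !mxE in dxy.
apply: ler_pM; rewrite ?mulr_ge0 ?addr_ge0 ?exprn_ge0 // ler_wpM2l //.
by rewrite !lerD ?lerXn2r ?nnegrE ?normr_mxentry_le.
Qed.

Lemma sl_H_cst c : H (fun _ => c).
Proof.
apply: (@sl_H_comp1 (fun _ => c) 0 0 (fun _ => 0)) => //; last exact: sl_H0.
by move=> a b; rewrite subrr normr0 !mul0r.
Qed.

Lemma sl_H_opp X : H X -> H (fun w => - X w).
Proof.
move=> /(sl_HZ (-1)); congr H.
by apply/funext => w; rewrite mulN1r.
Qed.

Lemma sl_H_sqr X : H X -> H (fun w => X w ^+ 2).
Proof.
apply: (@sl_H_comp1 (fun a => a ^+ 2) 1 1) => // a b.
apply: le_trans (normr_subr_sqr_le a b) _.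
by rewrite mul1r !expr1 ler_wpM2r // -addrA lerDr.
Qed.

Lemma sl_H_sqr_min1 X c d : H X -> H (fun w => X w ^+ 2 * Num.min 1 `|c * X w / d|).
Proof.
apply: (@sl_H_comp1 (fun a => a ^+ 2 * Num.min 1 `|c * a / d|) (1 + `|c / d|) 2) => //.
exact: sqr_min1_lip.
Qed.

Lemma sl_E_le_cst X c : H X -> (forall w, X w <= c) -> (E X <= c%:E)%E.
Proof. by move=> hX hc; rewrite -(sl_cst S c); apply: sl_mono => //; exact: sl_H_cst. Qed.

Lemma sl_E_ge_cst X c : H X -> (forall w, c <= X w) -> (c%:E <= E X)%E.
Proof. by move=> hX hc; rewrite -(sl_cst S c); apply: sl_mono => //; exact: sl_H_cst. Qed.

Lemma fine_sl_E_ge0 X : H X -> (forall w, 0 <= X w) -> 0 <= fine (E X).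
Proof. by move=> hX X0; rewrite fine_ge0 // sl_E_ge_cst. Qed.

Lemma sl_E_bounded_fin X a b : H X -> (forall w, a <= X w <= b) -> E X \is a fin_num.
Proof.
move=> hX hab; rewrite fin_numElt.
rewrite (lt_le_trans (ltNyr a)) ?(le_lt_trans _ (ltry b)) //.
- by apply: sl_E_le_cst => // w; case/andP: (hab w).
- by apply: sl_E_ge_cst => // w; case/andP: (hab w).
Qed.

Lemma sl_E_scale X l : H X -> 0 <= l -> E (fun w => l * X w) = (l%:E * E X)%E.
Proof.
move=> hX; rewrite le_eqVlt => /orP[/eqP <-|l0]; last exact: sl_homog.
rewrite mul0e (_ : (fun w => 0 * X w) = fun _ => 0) ?sl_cst //.
by apply/funext => w; rewrite mul0r.
Qed.

Lemma sl_E_add_le X Y a b : H X -> H Y -> (E X <= a%:E)%E -> (E Y <= b%:E)%E ->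
  (E (fun w => (X w + Y w)%R) <= (a + b)%:E)%E.
Proof.
move=> hX hY hXa hYb; apply: le_trans (sl_subadd hX hY _ _) _.
- by case=> hXoo _; move: hXa; rewrite hXoo.
- by case=> _ hYoo; move: hYb; rewrite hYoo.
- by rewrite EFinD leeD.
Qed.

Lemma sl_E_scale_le X (l e : R) : H X -> 0 <= l -> (E X <= e%:E)%E ->
  (E (fun w => (l * X w)%R) <= (l * e)%:E)%E.
Proof. by move=> hX l0 hXe; rewrite sl_E_scale // EFinM lee_wpmul2l. Qed.

Lemma fine_lower_E_le Z : H Z -> (forall w, 0 <= Z w) -> (E Z < +oo)%E ->
  fine (lower_E S Z) <= fine (E Z).
Proof.
move=> hZ Z0 Zoo.
have fZ : E Z \is a fin_num by rewrite ge0_fin_numE // sl_E_ge_cst.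
have hN := sl_H_opp hZ.
have EN0 : (E (fun w => (- Z w)%R) <= 0%:E)%E by apply: sl_E_le_cst => // w; rewrite oppr_le0.
have EZN_ge0 : (0%:E <= E Z + E (fun w => (- Z w)%R))%E.
  rewrite -(sl_cst S 0) (_ : (fun _ => 0) = fun w => (Z w + - Z w)%R); last first.
    by apply/funext => w; rewrite subrr.
  by apply: sl_subadd => // -[hZoo _]; move: fZ; rewrite hZoo.
rewrite /lower_E -(fineK fZ) in EZN_ge0 *.
by case: (E (fun w => (- Z w)%R)) EZN_ge0 EN0 => [r||] //=; rewrite -EFinD !lee_fin; lra.
Qed.

Lemma fine_sl_E_sqr_min1_ge0 X c d : H X ->
  0 <= fine (E (fun w => X w ^+ 2 * Num.min 1 `|c * X w / d|)).
Proof.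
move=> hX; apply: fine_sl_E_ge0 => [|w]; first exact: sl_H_sqr_min1.
by rewrite mulr_ge0 ?sqr_ge0 // le_min ler01 normr_ge0.
Qed.

Lemma sl_E_sqr_min1_fin X c d : H X -> (E (fun w => (X w ^+ 2)%R) < +oo)%E ->
  E (fun w => X w ^+ 2 * Num.min 1 `|c * X w / d|) \is a fin_num.
Proof.
move=> hX X2oo; have min1_01 w : 0 <= Num.min 1 `|c * X w / d| <= 1.
  by rewrite le_min ler01 normr_ge0 ge_min lexx.
have hm := sl_H_sqr_min1 c d hX.
rewrite ge0_fin_numE; last first.
  by apply: sl_E_ge_cst => // w; have /andP[m0 _] := min1_01 w; rewrite mulr_ge0 ?sqr_ge0.
apply: le_lt_trans X2oo; apply: sl_mono => // [|w]; first exact: sl_H_sqr.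
by have /andP[_ m1] := min1_01 w; rewrite -[leRHS]mulr1 ler_wpM2l ?sqr_ge0.
Qed.

Lemma capV_le_sl_E (A : set Omega) xi : H xi -> (forall w, 0 <= xi w) ->
  (forall w, A w -> 1 <= xi w) -> (capV S A <= E xi)%E.
Proof.
move=> hxi xi0 xi1; apply: ereal_inf_lbound; exists xi => //; split => // w.
by rewrite indicE; case: (boolP (w \in A)) => [/set_mem/xi1|_].
Qed.

End SublinearExpectation.

Section ExponentialInequality.
Variables (R : realType) (Omega : Type) (S : sublinear_space R Omega).
Local Notation E := (sl_E S).
Local Notation H := (sl_H S).

Lemma sl_H_phi l (Y : Omega -> R) : 0 <= l -> H Y -> H (fun w => phi l (Y w)).
Proof.
move=> l0; apply: (@sl_H_comp1 _ _ S (phi l) (4/3 * (l + l ^+ 2)) 1).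
  by rewrite mulr_ge0 ?addr_ge0 ?sqr_ge0 //; lra.
by move=> a b; rewrite !expr1; exact: phi_lip.
Qed.

Lemma sl_H_prod_phi p (Xs : 'I_p -> Omega -> R) l : 0 <= l -> (forall j, H (Xs j)) ->
  H (fun w => \prod_(j < p) phi l (Xs j w)).
Proof.
move=> l0 hXs; have -> : (fun w => \prod_(j < p) phi l (Xs j w)) =
    compose_rv (fun z : 'rV[R]_p => \prod_(j < p) phi l (z 0 j)) Xs.
  by apply/funext => w; apply: eq_bigr => j _; rewrite mxE.
by apply: sl_Hcomp => //; right; exact: loc_lip_poly_prod_phi.
Qed.

Lemma sl_E_phi_fin l (Y : Omega -> R) : 0 <= l -> H Y -> E (fun w => phi l (Y w)) \is a fin_num.
Proof.
move=> l0 hY; apply: (@sl_E_bounded_fin _ _ S _ 0 (4/3)); first exact: sl_H_phi.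
by move=> w; exact: phi_bounds.
Qed.

Lemma sl_E_phi_le (Y : Omega -> R) (l K c d : R) :
  H Y -> (E (fun w => (Y w ^+ 2)%R) < +oo)%E -> (E Y <= 0)%E -> 0 <= l -> 0 <= K ->
  (forall a, (l * a) ^+ 2 * Num.min 1 `|l * a| <= K * (a ^+ 2 * Num.min 1 `|c * a / d|)) ->
  fine (E (fun w => phi l (Y w))) <=
    1 - l ^+ 2 / 2 * fine (lower_E S (fun w => Y w ^+ 2))
      + 10 * K * fine (E (fun w => Y w ^+ 2 * Num.min 1 `|c * Y w / d|)).
Proof.
move=> hY Y2oo EY0 l0 K0 hK.
set rho := fun w => Y w ^+ 2 * Num.min 1 `|c * Y w / d|.
have Erho_fin : E rho \is a fin_num := sl_E_sqr_min1_fin c d hY Y2oo.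
have hrho : H rho := sl_H_sqr_min1 c d hY.
have hY2N := sl_H_opp (sl_H_sqr hY).
have lee_fine (e : \bar R) : (e <= 0%:E)%E -> (e <= (fine e)%:E)%E by case: e.
rewrite -lee_fin fineK ?sl_E_phi_fin //.
(* [fine (lower_E _)] is [- fine (E (- Y ^ 2))] even if the latter is infinite. *)
have -> : 1 - l ^+ 2 / 2 * fine (lower_E S (fun w => Y w ^+ 2)) + 10 * K * fine (E rho) =
    l * 0 + (1 + (l ^+ 2 / 2 * fine (E (fun w => - Y w ^+ 2)) + 10 * K * fine (E rho))).
  by rewrite /lower_E fineN; ring.
have hlY := sl_HZ l hY.
have hY2s := sl_HZ (l ^+ 2 / 2) hY2N; have hrhos := sl_HZ (10 * K) hrho.
have hW := sl_HD hY2s hrhos; have h1W := sl_HD (sl_H_cst S 1) hW.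
apply: le_trans (sl_mono (sl_H_phi l0 hY) (sl_HD hlY h1W) (fun w => phi_le_quadratic _ hK)) _.
apply: sl_E_add_le => //; first by rewrite mulr0 sl_E_scale // mule_ge0_le0.
apply: sl_E_add_le => //; [exact: sl_H_cst | by rewrite sl_cst | ].
apply: sl_E_add_le => //; apply: sl_E_scale_le => //.
- by rewrite divr_ge0 ?sqr_ge0.
- by apply: lee_fine; apply: sl_E_le_cst => // w; rewrite oppr_le0 sqr_ge0.
- by rewrite mulr_ge0.
- by rewrite fineK.
Qed.

Lemma sl_E_prod_phi_indep m (Xs : 'I_m -> Omega -> R) (Y : Omega -> R) l :
  0 <= l -> (forall j, H (Xs j)) -> H Y -> independent_of S Xs Y ->
  E (fun w => (\prod_(j < m) phi l (Xs j w)) * phi l (Y w)) =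
    (E (fun w => (\prod_(j < m) phi l (Xs j w))%R) * E (fun w => phi l (Y w)))%E.
Proof.
move=> l0 hXs hY indep.
have hP := sl_H_prod_phi l0 hXs.
set e := fine (E (fun w => phi l (Y w))).
have Ee : E (fun w => phi l (Y w)) = e%:E by rewrite fineK // sl_E_phi_fin.
have e0 : 0 <= e.
  by apply: fine_sl_E_ge0 => [|w]; [exact: sl_H_phi | case/andP: (phi_bounds l (Y w))].
have psiE (x : 'rV[R]_m) :
    E (fun w => \prod_(j < m + 1) phi l (row_mx x (\row_(j0 < 1) Y w) 0 j)) =
    ((\prod_(j < m) phi l (x 0 j)) * e)%:E.
  under eq_fun do rewrite prod_phi_row_mx.
  rewrite sl_E_scale ?Ee ?EFinM //; first exact: sl_H_phi.
  by apply: prodr_ge0 => j _; case/andP: (phi_bounds l (x 0 j)).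
have psi_Xs : (fun w => fine (E (fun w0 =>
      \prod_(j < m + 1) phi l (row_mx (\row_i Xs i w) (\row_(j0 < 1) Y w0) 0 j)))) =
    (fun w => e * \prod_(j < m) phi l (Xs j w)).
  apply/funext => w; rewrite psiE /= mulrC; congr (_ * _).
  by apply: eq_bigr => j _; rewrite mxE.
have prod_row : (fun w =>
      \prod_(j < m + 1) phi l (row_mx (\row_i Xs i w) (\row_(j0 < 1) Y w) 0 j)) =
    (fun w => (\prod_(j < m) phi l (Xs j w)) * phi l (Y w)).
  apply/funext => w; rewrite prod_phi_row_mx; congr (_ * _).
  by apply: eq_bigr => j _; rewrite mxE.
have := indep _ (loc_lip_poly_prod_phi _ l0); rewrite /= psi_Xs prod_row => -> //.
- by rewrite sl_E_scale // Ee muleC.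
- by move=> x; rewrite psiE.
- apply: (@sl_E_bounded_fin _ _ S _ 0 (e * (4/3) ^+ m)); first exact: sl_HZ.
  by move=> w; have /andP[P0 P1] := prod_phi_bounds l (Xs ^~ w); rewrite mulr_ge0 ?ler_wpM2l.
Qed.

Lemma sl_E_prod_phi (X : nat -> Omega -> R) l p : 0 <= l ->
  (forall k, (1 <= k)%N -> H (X k)) -> indep_seq S X ->
  E (fun w => \prod_(j < p) phi l (X j.+1 w)) =
    (\prod_(j < p) fine (E (fun w => phi l (X j.+1 w))))%:E.
Proof.
(* [indep_seq] only relates [X (i + 1)] to a nonempty prefix, hence the case [p = 1]. *)
move=> l0 hX indep; elim: p => [|[|p] IH].
- rewrite big_ord0 -(sl_cst S 1); congr E; apply/funext => w; exact: big_ord0.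
- rewrite big_ord1 fineK; last exact: sl_E_phi_fin (hX _ _).
  by congr E; apply/funext => w; rewrite big_ord1.
- rewrite big_ord_recr EFinM -IH fineK; last exact: sl_E_phi_fin (hX _ _).
  rewrite -(@sl_E_prod_phi_indep _ (fun j => X j.+1) (X p.+2)) //.
  + by congr E; apply/funext => w; rewrite big_ord_recr.
  + by move=> j; exact: hX.
  + exact: hX.
  + exact: indep.
Qed.

Lemma sl_E_prod_phi_le (X : nat -> Omega -> R) n (l K c d : R) : 0 <= l -> 0 <= K ->
  (forall k, (1 <= k)%N -> H (X k)) -> indep_seq S X ->
  (forall k, (1 <= k)%N -> (E (fun w => (X k w ^+ 2)%R) < +oo)%E) ->
  (forall k, (1 <= k)%N -> (E (X k) <= 0)%E) ->
  (forall a, (l * a) ^+ 2 * Num.min 1 `|l * a| <= K * (a ^+ 2 * Num.min 1 `|c * a / d|)) ->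
  (E (fun w => (\prod_(j < n) phi l (X j.+1 w))%R) <=
    (expR (\sum_(1 <= k < n.+1)
       (10 * K * fine (E (fun w => X k w ^+ 2 * Num.min 1 `|c * X k w / d|))
        - l ^+ 2 / 2 * fine (lower_E S (fun w => X k w ^+ 2)))))%:E)%E.
Proof.
move=> l0 K0 hX indep X2oo EX0 hK.
rewrite sl_E_prod_phi // lee_fin big_add1 big_mkord expR_sum.
apply: ler_prod => j _; apply/andP; split.
  apply: fine_sl_E_ge0 => [|w]; first exact: sl_H_phi (hX _ _).
  by case/andP: (phi_bounds l (X j.+1 w)).
apply: le_trans (sl_E_phi_le (hX _ _) (X2oo _ _) (EX0 _ _) l0 K0 hK) _ => //.
by apply: le_trans (expR_ge1Dx _); lra.
Qed.

End ExponentialInequality.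

Theorem proposition6p2 (R : realType) :
  exists C : R,
  forall (Omega : Type) (S : sublinear_space R Omega) (X : nat -> Omega -> R)
         (n : nat) (delta x : R),
    (forall k, (1 <= k)%N -> sl_H S (X k)) ->
    indep_seq S X ->
    (forall k, (1 <= k)%N -> (sl_E S (fun w => (X k w ^+ 2)%R) < +oo)%E) ->
    (forall k, (1 <= k)%N -> (sl_E S (X k) <= 0)%E) ->
    let Sn := fun w => \sum_(1 <= k < n.+1) X k w in
    let Vn := fun w => Num.sqrt (\sum_(1 <= k < n.+1) X k w ^+ 2) in
    let Bbar2 := \sum_(1 <= k < n.+1) fine (sl_E S (fun w => X k w ^+ 2)) in
    let Bund2 := \sum_(1 <= k < n.+1) fine (lower_E S (fun w => X k w ^+ 2)) in
    let qn := Bbar2 / Bund2 in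
    let Delta := Bbar2^-1 * \sum_(1 <= k < n.+1)
          fine (sl_E S (fun w => X k w ^+ 2 *
                   Num.min 1 `|x * X k w / Num.sqrt Bbar2|)) in
    0 < Bund2 ->
    0 < delta -> delta <= 4^-1 * (Bund2 / Bbar2) ->
    2 <= x ->
    (capV S [set w | (x * Vn w <= Sn w)%R /\ (Vn w ^+ 2 <= delta * Bbar2)%R]
       <= (expR (- 2 * x ^+ 2 + C * x ^+ 2 * qn ^+ 3 * Delta))%:E)%E.
Proof.
(* 80 = 10 (from [expR_sub_sqr_le]) * 2 (truncation, [sqr_min1_ratio_le]) * 4 ([l^2 b = 4 x^2]). *)
exists 80 => Omega S X n delta x hX indep X2oo EX0 Sn Vn B b q Delta b0 delta0 delta_le x2.
have bB : b <= B.
  apply: ler_sum_nat => k /andP[k1 _].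
  by apply: fine_lower_E_le; [exact: sl_H_sqr (hX k k1) | move=> w; exact: sqr_ge0 | exact: X2oo].
have B0 : 0 < B := lt_le_trans b0 bB.
have x0 : 0 < x by lra.
have sb0 : 0 < Num.sqrt b by rewrite sqrtr_gt0.
have sbB : Num.sqrt b <= Num.sqrt B by rewrite ler_sqrt // ltW.
pose l := 2 * x / Num.sqrt b.
have l0 : 0 <= l by rewrite divr_ge0 ?mulr_ge0 // ltW.
have ratio : (Num.sqrt B / Num.sqrt b) ^+ 2 = q by rewrite expr_div_n !sqr_sqrtr // ltW.
have hK := sqr_min1_ratio_le _ x0 sb0 sbB; rewrite -/l ratio in hK.
apply: le_trans (capV_le_sl_E (sl_H_prod_phi l0 (fun j : 'I_n => hX j.+1 isT)) _ _) _.
- by move=> w; case/andP: (prod_phi_bounds l (fun j : 'I_n => X j.+1 w)).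
- move=> w [hS hV]; rewrite /Sn /Vn !big_add1 /= !big_mkord in hS hV.
  apply: one_le_prod_phi_scaled (ltW x0) b0 hS _.
  rewrite sqr_sqrtr ?sumr_ge0 // in hV => [|j _]; last exact: sqr_ge0.
  apply: le_trans hV _; rewrite -ler_pdivlMr // mulrC; apply: le_trans delta_le _; lra.
apply: le_trans (sl_E_prod_phi_le n l0 _ hX indep X2oo EX0 hK) _.
  by rewrite !mulr_ge0 ?sqr_ge0 ?invr_ge0 ?ltW.
rewrite lee_fin ler_expR big_split /= sumrN -!mulr_sumr -/b.
have Delta0 : 0 <= Delta.
  rewrite /Delta mulr_ge0 ?invr_ge0 ?(ltW B0) // big_nat_cond sumr_ge0 // => k /andP[/andP[k1 _] _].
  exact: fine_sl_E_sqr_min1_ge0 (hX k k1).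
rewrite (_ : \sum_(1 <= i < n.+1) _ = B * Delta); last first.
  by rewrite /Delta mulrA divff ?mul1r // gt_eqF.
exact: lambda_exponent_le.
Qed.
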